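(* Fix $T>0$, $C_0>0$ and $\gamma>0$, and suppose (A3), (A4) hold. On the event $\{\|\mathbf X\|_{op}\le C_0\}$ there is a constant $C>0$, depending on $T$, $C_0$ (and on $\beta,\delta$ and the constants in (A3)–(A4)) but not on $\gamma$ or on $n,d$, such that for every realization of the noise, $$\max_{0\le s\le t\le T/\gamma}\max_{j\in[d]}\Big[\big\|\partial_\varepsilon|_{\varepsilon=0}\boldsymbol\theta^{t,(s,j),\varepsilon}\big\|+\sqrt d\,\big\|\partial_\varepsilon|_{\varepsilon=0}\widehat\alpha^{t,(s,j),\varepsilon}\big\|\Big]\le C\gamma,$$ $$\max_{0\le s\le t\le T/\gamma}\max_{i\in[n]}\Big[\big\|\partial_\varepsilon|_{\varepsilon=0}\boldsymbol\theta^{t,[s,i],\varepsilon}\big\|+\sqrt d\,\big\|\partial_\varepsilon|_{\varepsilon=0}\widehat\alpha^{t,[s,i],\varepsilon}\big\|\Big]\le C\gamma,$$ where $s,t$ range over integers.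
   Context: (A3) $s:\mathbb R\times\mathbb R^K\to\mathbb R$ is $C^2$ with $|s(\theta,\alpha)|\le C(1+|\theta|+\|\alpha\|)$ and $\|\nabla_{(\theta,\alpha)}s\|_2,\|\nabla^2_{(\theta,\alpha)}s\|_{op}\le C$. (A4) $\mathcal G:\mathbb R^K\times\mathcal P_2(\mathbb R)\to\mathbb R^K$ satisfies $\|\mathcal G(\alpha,\mathsf P)\|\le C(1+\|\alpha\|+(\mathbb E_{\mathsf P}\theta^2)^{1/2})$, $\|\mathcal G(\alpha,\mathsf P)-\mathcal G(\alpha',\mathsf P')\|\le C(\|\alpha-\alpha'\|+W_2(\mathsf P,\mathsf P'))$, and with $\widehat{\mathsf P}(\boldsymbol\theta)=\frac1d\sum_j\delta_{\theta_j}$ each $(\boldsymbol\theta,\alpha)\mapsto\mathcal G_k(\alpha,\widehat{\mathsf P}(\boldsymbol\theta))$ is $C^2$ with $\|\nabla_\alpha\mathcal G_k\|\le C$, $\sqrt d\|\nabla_{\boldsymbol\theta}\mathcal G_k\|\le C$, $d\|\nabla^2_{\boldsymbol\theta}\mathcal G_k\|_{op}\le C$, $\sqrt d\|\nabla_{\boldsymbol\theta}\nabla_\alpha\mathcal G_k\|_{op}\le C$, $\|\nabla^2_\alpha\mathcal G_k\|_{op}\le C$, with $C$ independent of $d$. Here $\mathbf X\in\mathbb R^{n\times d}$, $\mathbf y\in\mathbb R^n$, $\beta\in\mathbb R$, with $n/d$ bounded. Perturbed discrete dynamics. For integer $s\ge0$, $j\in[d]$, $\varepsilon\in\mathbb R$: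 $\boldsymbol\theta^{t+1,(s,j),\varepsilon}=\boldsymbol\theta^{t,(s,j),\varepsilon}-\gamma[\beta\mathbf X^\top(\mathbf X\boldsymbol\theta^{t,(s,j),\varepsilon}-\mathbf y)-(s(\theta^{t,(s,j),\varepsilon}_k,\widehat\alpha^{t,(s,j),\varepsilon}))_k-\varepsilon\mathbf e_j\mathbf 1_{t=s}]+\sqrt2(\mathbf b^{t+1}-\mathbf b^t)$, $\widehat\alpha^{t+1,(s,j),\varepsilon}=\widehat\alpha^{t,(s,j),\varepsilon}+\gamma\mathcal G(\widehat\alpha^{t,(s,j),\varepsilon},\widehat{\mathsf P}(\boldsymbol\theta^{t,(s,j),\varepsilon}))$. For $i\in[n]$, $(\boldsymbol\theta^{t,[s,i],\varepsilon},\widehat\alpha^{t,[s,i],\varepsilon})$ is defined identically with $\varepsilon\mathbf e_j$ replaced by $\varepsilon\mathbf X^\top\mathbf e_i$. All start from the same initial condition $(\boldsymbol\theta^0,\widehat\alpha^0)$ and use the same noise $\mathbf b^t$ (with $\mathbf b^0=0$ and increments $\mathcal N(0,\gamma\mathbf I_d)$). Here $\mathbf e_j$ denotes the $j$-th standard basis vector. *)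

From HB Require Import structures.
From mathcomp Require Import all_boot all_order all_algebra.
From mathcomp Require Import all_classical all_reals all_analysis.
Import Order.TTheory GRing.Theory Num.Theory numFieldNormedType.Exports.

Set Implicit Arguments.
Unset Strict Implicit.
Unset Printing Implicit Defensive.

Local Open Scope classical_set_scope.
Local Open Scope ring_scope.

Section Defs.
Variable R : realType.

Definition enorm (m : nat) (v : 'cV[R]_m) : R := Num.sqrt (\sum_(i < m) v i 0 ^+ 2).

Definition opnorm (m n : nat) (A : 'M[R]_(m, n)) : R :=
  sup [set enorm (A *m v) | v in [set v : 'cV[R]_n | enorm v <= 1]].

Definition evec (m : nat) (i : 'I_m) : 'cV[R]_m := delta_mx i 0.

Definition pder (m : nat) (i : 'I_m) (f : 'cV[R]_m -> R) (x : 'cV[R]_m) : R :=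
  'D_(evec i) f x.

Definition C2 (m : nat) (f : 'cV[R]_m -> R) : Prop :=
  [/\ (forall x i, derivable f x (evec i)),
      (forall i, continuous (pder i f)),
      (forall x i j, derivable (pder i f) x (evec j)) &
      (forall i j, continuous (pder j (pder i f)))].

Definition grad (m : nat) (f : 'cV[R]_m -> R) (x : 'cV[R]_m) : 'cV[R]_m :=
  \col_i pder i f x.
Definition hess (m : nat) (f : 'cV[R]_m -> R) (x : 'cV[R]_m) : 'M[R]_m :=
  \matrix_(i, j) pder j (pder i f) x.

Definition second_moment (P : {measure set R -> \bar R}) : \bar R :=
  (\int[P]_x ((x ^+ 2)%:E))%E.

Definition inP2 (P : {measure set R -> \bar R}) : Prop :=
  P setT = 1%E /\ (second_moment P < +oo)%E.

Definition esqrt (x : \bar R) : \bar R :=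
  match x with
  | EFin r => (Num.sqrt r)%:E
  | EPInf => +oo%E
  | ENInf => 0%E
  end.

Definition coupling (P Q : {measure set R -> \bar R})
    (pi : {measure set (R * R)%type -> \bar R}) : Prop :=
  pi setT = 1%E /\
  (forall A : set R, measurable A -> pi (A `*` [set: R]) = P A) /\
  (forall B : set R, measurable B -> pi ([set: R] `*` B) = Q B).

Definition W2 (P Q : {measure set R -> \bar R}) : \bar R :=
  esqrt (ereal_inf [set (\int[pi]_z (((z.1 - z.2) ^+ 2)%:E))%E
                   | pi in coupling P Q]).

Definition empirical (d : nat) (th : 'cV[R]_d) : {measure set R -> \bar R} :=
  mscale (d%:R^-1 : R)%:nng
    (msum (fun k : nat => (\d_(nth 0 [seq th j 0 | j : 'I_d] k) : {measure set R -> \bar R})) d).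

Definition svec (K d : nat) (s : R -> 'cV[R]_K -> R) (th : 'cV[R]_d) (al : 'cV[R]_K)
  : 'cV[R]_d := \col_k s (th k 0) al.

Definition sjoint (K : nat) (s : R -> 'cV[R]_K -> R) (z : 'cV[R]_(1 + K)) : R :=
  s (usubmx z 0 0) (dsubmx z).

Definition Gjoint (K d : nat)
  (G : 'cV[R]_K -> {measure set R -> \bar R} -> 'cV[R]_K) (k : 'I_K)
  (z : 'cV[R]_(d + K)) : R :=
  G (dsubmx z) (empirical (usubmx z)) k 0.

Definition A3 (K : nat) (CA : R) (s : R -> 'cV[R]_K -> R) : Prop :=
  [/\ C2 (sjoint s),
      (forall th al, `|s th al| <= CA * (1 + `|th| + enorm al)),
      (forall z, enorm (grad (sjoint s) z) <= CA) &
      (forall z, opnorm (hess (sjoint s) z) <= CA)].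

Definition A4 (K : nat) (CA : R)
  (G : 'cV[R]_K -> {measure set R -> \bar R} -> 'cV[R]_K) : Prop :=
  [/\ (forall al P, inP2 P ->
         ((enorm (G al P))%:E <= CA%:E * (1 + (enorm al)%:E + esqrt (second_moment P)))%E),
      (forall al al' P P', inP2 P -> inP2 P' ->
         ((enorm (G al P - G al' P'))%:E <= CA%:E * ((enorm (al - al'))%:E + W2 P P'))%E) &
      (forall (d : nat) (k : 'I_K), (0 < d)%N ->
         let f := @Gjoint K d G k in
         C2 f /\
         [/\ forall z, enorm (dsubmx (grad f z)) <= CA,
             forall z, Num.sqrt d%:R * enorm (usubmx (grad f z)) <= CA,
             forall z, d%:R * opnorm (ulsubmx (hess f z)) <= CA,
             forall z, Num.sqrt d%:R * opnorm (ursubmx (hess f z)) <= CA &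
             forall z, opnorm (drsubmx (hess f z)) <= CA])].

(** Perturbed discrete dynamics, perturbation direction u injected at time s0
    with size eps. Returns (theta^t, alpha^t). *)
Fixpoint dyn (n d K : nat) (X : 'M[R]_(n, d)) (y : 'cV[R]_n) (beta gamma : R)
  (s : R -> 'cV[R]_K -> R) (G : 'cV[R]_K -> {measure set R -> \bar R} -> 'cV[R]_K)
  (b : nat -> 'cV[R]_d) (th0 : 'cV[R]_d) (al0 : 'cV[R]_K)
  (u : 'cV[R]_d) (s0 : nat) (eps : R) (t : nat) : 'cV[R]_d * 'cV[R]_K :=
  match t with
  | 0%N => (th0, al0)
  | t'.+1 =>
    let: (th, al) := dyn X y beta gamma s G b th0 al0 u s0 eps t' in
    (th - gamma *: (beta *: (X^T *m (X *m th - y)) - svec s th al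
                    - (if t' == s0 then eps *: u else 0))
        + Num.sqrt 2 *: (b t'.+1 - b t'),
     al + gamma *: G al (empirical th))
  end.

End Defs.
Arguments evec {R m} i.

From HB Require Import structures.
From mathcomp Require Import all_boot all_order all_algebra.
From mathcomp Require Import all_classical all_reals all_analysis.
Import Order.TTheory GRing.Theory Num.Theory numFieldNormedType.Exports.
From mathcomp Require Import measurable_realfun ring lra.

(* A perturbation [eps u] injected at time [s0] moves the state by at most
   [gamma |eps| |u|]. Under (A3)-(A4) one step of the dynamics is Lipschitz with
   constant [1 + gamma c] for the distance [|theta - theta'| + sqrt d |alpha - alpha'|];
   the weight [sqrt d] matches the bound [|theta - theta'| / sqrt d] on the W2 distance
   of the empirical measures, obtained from their diagonal coupling. After
   [t <= T / gamma] steps the perturbed and unperturbed trajectories are thus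
   [gamma |eps| |u| e^(c T)] apart, which bounds the derivative in [eps]; both
   directions [e_j] and [X^T e_i] have norm at most [max(1, C0)]. *)

Set Implicit Arguments.
Unset Strict Implicit.
Unset Printing Implicit Defensive.

Local Open Scope classical_set_scope.
Local Open Scope ring_scope.

Section EuclideanNorm.
Variable R : realType.

Definition sqnorm m (v : 'cV[R]_m) : R := \sum_(i < m) v i 0 ^+ 2.
Definition cdot m (u v : 'cV[R]_m) : R := \sum_(i < m) u i 0 * v i 0.

Lemma sqnorm_ge0 m (v : 'cV[R]_m) : 0 <= sqnorm v.
Proof. by apply: sumr_ge0 => i _; rewrite sqr_ge0. Qed.

Lemma enorm_ge0 m (v : 'cV[R]_m) : 0 <= enorm v.
Proof. exact: sqrtr_ge0. Qed.

Lemma enorm_sqr m (v : 'cV[R]_m) : enorm v ^+ 2 = sqnorm v.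
Proof. by rewrite sqr_sqrtr // sqnorm_ge0. Qed.

Lemma sqnorm_eq0 m (v : 'cV[R]_m) : sqnorm v = 0 -> v = 0.
Proof.
move=> /psumr_eq0P v0; apply/matrixP => i j; rewrite (ord1 j) mxE.
by apply/eqP; rewrite -sqrf_eq0 v0 // => k _; rewrite sqr_ge0.
Qed.

Lemma enorm_eq0 m (v : 'cV[R]_m) : enorm v = 0 -> v = 0.
Proof. by move=> v0; apply: sqnorm_eq0; rewrite -enorm_sqr v0 expr0n. Qed.

Lemma cdot_Cauchy_Schwarz m (u v : 'cV[R]_m) : cdot u v ^+ 2 <= sqnorm u * sqnorm v.
Proof.
have [/sqnorm_eq0 ->|u_neq0] := eqVneq (sqnorm u) 0.
  rewrite /cdot big1 ?expr0n ?mulr_ge0 ?sqnorm_ge0 // => i _.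
  by rewrite mxE mul0r.
have u_gt0 : 0 < sqnorm u by rewrite lt_def u_neq0 sqnorm_ge0.
(* Expand [0 <= |(u.u) v - (u.v) u|^2]. *)
have : 0 <= \sum_(i < m) (sqnorm u * v i 0 - cdot u v * u i 0) ^+ 2.
  by apply: sumr_ge0 => i _; rewrite sqr_ge0.
have -> : \sum_(i < m) (sqnorm u * v i 0 - cdot u v * u i 0) ^+ 2
    = sqnorm u * (sqnorm u * sqnorm v - cdot u v ^+ 2).
  transitivity (\sum_(i < m) (sqnorm u ^+ 2 * v i 0 ^+ 2
      - 2 * sqnorm u * cdot u v * (u i 0 * v i 0) + cdot u v ^+ 2 * u i 0 ^+ 2)).
    by apply: eq_bigr => i _; ring.
  rewrite big_split sumrB /= -!mulr_sumr -/(sqnorm v) -/(cdot u v) -/(sqnorm u).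
  ring.
by rewrite pmulr_rge0 // subr_ge0.
Qed.

Lemma cdot_le_enorm m (u v : 'cV[R]_m) : cdot u v <= enorm u * enorm v.
Proof.
apply: le_trans (ler_norm _) _.
rewrite -ler_sqr ?nnegrE ?mulr_ge0 ?enorm_ge0 // real_normK ?num_real //.
by rewrite exprMn !enorm_sqr cdot_Cauchy_Schwarz.
Qed.

Lemma enormD m (u v : 'cV[R]_m) : enorm (u + v) <= enorm u + enorm v.
Proof.
rewrite -ler_sqr ?nnegrE ?addr_ge0 ?enorm_ge0 // enorm_sqr sqrrD !enorm_sqr.
have -> : sqnorm (u + v) = sqnorm u + 2 * cdot u v + sqnorm v.
  rewrite /sqnorm /cdot mulr_sumr -!big_split /=.
  by apply: eq_bigr => i _; rewrite !mxE; ring.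
have := cdot_le_enorm u v; lra.
Qed.

Lemma enormZ m (c : R) (v : 'cV[R]_m) : enorm (c *: v) = `|c| * enorm v.
Proof.
rewrite /enorm -sqrtr_sqr -sqrtrM ?sqr_ge0 // mulr_sumr.
by congr Num.sqrt; apply: eq_bigr => i _; rewrite mxE exprMn.
Qed.

Lemma enormN m (v : 'cV[R]_m) : enorm (- v) = enorm v.
Proof. by rewrite -scaleN1r enormZ normrN normr1 mul1r. Qed.

Lemma enormB m (u v : 'cV[R]_m) : enorm (u - v) <= enorm u + enorm v.
Proof. by rewrite -(enormN v) enormD. Qed.

Lemma enorm0 m : enorm (0 : 'cV[R]_m) = 0.
Proof. by rewrite -(scale0r (0 : 'cV[R]_m)) enormZ normr0 mul0r. Qed.

Lemma coord_le_enorm m (v : 'cV[R]_m) i : `|v i 0| <= enorm v.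
Proof.
rewrite -ler_sqr ?nnegrE ?enorm_ge0 // real_normK ?num_real // enorm_sqr /sqnorm.
by rewrite (bigD1 i) //= lerDl sumr_ge0 // => j _; rewrite sqr_ge0.
Qed.

Lemma enorm_le_coord m (u v : 'cV[R]_m) :
  (forall i, `|u i 0| <= v i 0) -> enorm u <= enorm v.
Proof.
move=> uv; apply: ler_wsqrtr; apply: ler_sum => i _.
rewrite -real_normK ?num_real // ler_sqr ?nnegrE //.
exact: le_trans (normr_ge0 _) (uv i).
Qed.

Lemma enorm_col_norm m (v : 'cV[R]_m) : enorm (\col_i `|v i 0|) = enorm v.
Proof. by congr Num.sqrt; apply: eq_bigr => i _; rewrite mxE real_normK ?num_real. Qed.

Lemma enorm_const1 m : enorm (const_mx 1 : 'cV[R]_m) = Num.sqrt m%:R.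
Proof.
congr Num.sqrt; rewrite (eq_bigr (fun=> 1)) ?sumr_const ?card_ord // => i _.
by rewrite mxE expr1n.
Qed.

Lemma enorm_evec m (j : 'I_m) : enorm (evec j : 'cV[R]_m) = 1.
Proof.
rewrite /enorm (bigD1 j) //= big1 ?addr0 ?mxE ?eqxx ?expr1n ?sqrtr1 // => i ij.
by rewrite mxE (negbTE ij) expr0n.
Qed.

End EuclideanNorm.

Section OperatorNorm.
Variable R : realType.

Lemma enorm_mulmx_le_frobenius n d (X : 'M[R]_(n, d)) (v : 'cV[R]_d) :
  enorm (X *m v) <= Num.sqrt (\sum_(i < n) sqnorm (\col_j X i j)) * enorm v.
Proof.
rewrite -ler_sqr ?nnegrE ?mulr_ge0 ?sqrtr_ge0 ?enorm_ge0 // exprMn !enorm_sqr.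
rewrite sqr_sqrtr; last by apply: sumr_ge0 => i _; exact: sqnorm_ge0.
rewrite {1}/sqnorm mulr_suml; apply: ler_sum => i _.
have -> : (X *m v) i 0 = cdot (\col_j X i j) v.
  by rewrite mxE; apply: eq_bigr => j _; rewrite mxE.
exact: cdot_Cauchy_Schwarz.
Qed.

Lemma opnorm_has_ubound n d (X : 'M[R]_(n, d)) :
  has_ubound [set enorm (X *m v) | v in [set v : 'cV[R]_d | enorm v <= 1]].
Proof.
exists (Num.sqrt (\sum_(i < n) sqnorm (\col_j X i j))) => _ [v /= v1 <-].
apply: le_trans (enorm_mulmx_le_frobenius X v) _.
by apply: ler_piMr; rewrite ?sqrtr_ge0.
Qed.

Lemma opnorm_ge0 n d (X : 'M[R]_(n, d)) : 0 <= opnorm X.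
Proof.
have := ub_le_sup (opnorm_has_ubound X) (x := enorm (X *m 0)).
by rewrite mulmx0 enorm0; apply; exists 0; rewrite /= ?mulmx0 enorm0.
Qed.

Lemma enorm_mulmx_le n d (X : 'M[R]_(n, d)) (v : 'cV[R]_d) :
  enorm (X *m v) <= opnorm X * enorm v.
Proof.
have [/enorm_eq0 ->|v_neq0] := eqVneq (enorm v) 0.
  by rewrite mulmx0 !enorm0 mulr0.
have v_gt0 : 0 < enorm v by rewrite lt_def v_neq0 enorm_ge0.
have unit_v : enorm (X *m ((enorm v)^-1 *: v)) <= opnorm X.
  apply: (ub_le_sup (opnorm_has_ubound X)).
  by exists ((enorm v)^-1 *: v); rewrite //= enormZ gtr0_norm ?invr_gt0 // mulVf.
by move: unit_v; rewrite -scalemxAr enormZ gtr0_norm ?invr_gt0 // ler_pdivrMl // mulrC.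
Qed.

Lemma cdot_trmx n d (X : 'M[R]_(n, d)) (w : 'cV[R]_n) (v : 'cV[R]_d) :
  cdot (X^T *m w) v = cdot w (X *m v).
Proof.
rewrite /cdot.
transitivity (\sum_(i < d) \sum_(j < n) X j i * w j 0 * v i 0).
  by apply: eq_bigr => i _; rewrite mxE mulr_suml; apply: eq_bigr => j _; rewrite mxE.
rewrite exchange_big /=; apply: eq_bigr => j _; rewrite mxE mulr_sumr.
by apply: eq_bigr => i _; rewrite mulrA [w j 0 * _]mulrC.
Qed.

Lemma enorm_trmx_mulmx_le n d (X : 'M[R]_(n, d)) (w : 'cV[R]_n) :
  enorm (X^T *m w) <= opnorm X * enorm w.
Proof.
set z := X^T *m w.
have [->|z_neq0] := eqVneq (enorm z) 0.
  by rewrite mulr_ge0 ?opnorm_ge0 ?enorm_ge0.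
have z_gt0 : 0 < enorm z by rewrite lt_def z_neq0 enorm_ge0.
rewrite -(ler_pM2l z_gt0) -expr2 enorm_sqr.
have -> : sqnorm z = cdot w (X *m z).
  by rewrite -cdot_trmx; apply: eq_bigr => i _; rewrite expr2.
apply: le_trans (cdot_le_enorm _ _) _.
have -> : enorm z * (opnorm X * enorm w) = enorm w * (opnorm X * enorm z) by ring.
by apply: ler_wpM2l; [exact: enorm_ge0 | exact: enorm_mulmx_le].
Qed.

End OperatorNorm.

Section MeanValue.
Variable R : realType.

Lemma is_derive_line m (f : 'cV[R]_m -> R) (z v : 'cV[R]_m) (t : R) :
  derivable f (z + t *: v) v ->
  is_derive t 1 (fun r : R => f (z + r *: v)) ('D_v f (z + t *: v)).
Proof.
move=> df.
have quotE : (fun h : R => h^-1 *: (((fun r => f (z + r *: v)) \o shift t) (h *: 1)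
                                   - f (z + t *: v)))
    = (fun h : R => h^-1 *: ((f \o shift (z + t *: v)) (h *: v) - f (z + t *: v))).
  apply/funext => h /=; congr (_ *: (f _ - _)).
  by rewrite -[h *: 1]/(h * 1) mulr1 scalerDl addrCA.
by split; rewrite /derivable /derive quotE.
Qed.

Lemma increment_line_le m (f : 'cV[R]_m -> R) (v : 'cV[R]_m) (M : R) :
  (forall x, derivable f x v) -> (forall x, `|'D_v f x| <= M) ->
  forall z h, `|f (z + h *: v) - f z| <= M * `|h|.
Proof.
move=> df dM.
have incr_ge0 z h : 0 <= h -> `|f (z + h *: v) - f z| <= M * h.
  move=> h0; pose g r := f (z + r *: v).
  have g' (r : R) : is_derive r 1 g ('D_v f (z + r *: v)) by exact: is_derive_line.
  have g_cont : {within `[0, h], continuous g}.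
    by apply: derivable_within_continuous => r _; exact: (@ex_derive _ _ _ _ _ _ _ (g' r)).
  have -> : f z = g 0 by rewrite /g scale0r addr0.
  rewrite -/(g h).
  have [c _ ->] := MVT_segment h0 (fun r _ => g' r) g_cont.
  by rewrite subr0 normrM (ger0_norm h0) ler_wpM2r.
move=> z h; have [h0|h0] := leP 0 h; first by rewrite (ger0_norm h0); exact: incr_ge0.
have := incr_ge0 (z + h *: v) (- h); rewrite oppr_ge0 ltW // => /(_ isT).
by rewrite scaleNr addrK distrC (ltr0_norm h0).
Qed.

(* Change one coordinate at a time, from [x] to [y]. *)
Lemma increment_le_pder_bound m (f : 'cV[R]_m -> R) (M : R) :
  (forall x i, derivable f x (evec i)) -> (forall x i, `|pder i f x| <= M) ->
  forall x y, `|f y - f x| <= M * \sum_(i < m) `|y i 0 - x i 0|.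
Proof.
move=> df dM x y.
pose w k := \col_(i < m) (if (i < k)%N then y i 0 else x i 0).
have w_step (k : 'I_m) : w k.+1 = w k + (y k 0 - x k 0) *: evec k.
  apply/matrixP => i j; rewrite (ord1 j) !mxE ltnS leq_eqVlt.
  have [->|ik] := eqVneq i k; first by rewrite eqxx ltnn mulr1 addrC subrK.
  by rewrite val_eqE (negbTE ik) mulr0 addr0.
have -> : f y - f x = \sum_(k < m) (f (w k.+1) - f (w k)).
  rewrite -(big_mkord xpredT (fun k => f (w k.+1) - f (w k))) telescope_sumr //.
  by congr (f _ - f _); apply/matrixP => i j; rewrite (ord1 j) mxE ?ltn_ord.
rewrite mulr_sumr; apply: le_trans (ler_norm_sum _ _ _) _; apply: ler_sum => k _.
by rewrite w_step; exact: (increment_line_le (df^~ k) (dM^~ k)).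
Qed.

End MeanValue.

Section EmpiricalMeasure.
Variable R : realType.

Definition empirical_coupling d (th th' : 'cV[R]_d)
    : {measure set (R * R)%type -> \bar R} :=
  mscale (d%:R^-1 : R)%:nng
    (msum (fun k : nat => (\d_(nth 0 [seq th j 0 | j : 'I_d] k,
                               nth 0 [seq th' j 0 | j : 'I_d] k)
                           : {measure set (R * R)%type -> \bar R})) d).

Lemma nth_col_seq d (th : 'cV[R]_d) (k : 'I_d) : nth 0 [seq th j 0 | j : 'I_d] k = th k 0.
Proof. by rewrite (nth_map k) ?size_enum_ord // nth_ord_enum. Qed.

Local Open Scope ereal_scope.

(* Column entries are written [th k 0%R]: in [ereal_scope], [0] denotes [0 : \bar R]. *)
Lemma empiricalE d (th : 'cV[R]_d) A :
  empirical th A = (d%:R^-1)%R%:E * \sum_(k < d) (th k 0%R \in A)%:R%:E.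
Proof.
rewrite /empirical /= /mscale /msum /=; congr (_ * _).
by apply: eq_bigr => k _; rewrite nth_col_seq; exact: diracE.
Qed.

Lemma empirical_couplingE d (th th' : 'cV[R]_d) A :
  empirical_coupling th th' A
  = (d%:R^-1)%R%:E * \sum_(k < d) ((th k 0%R, th' k 0%R) \in A)%:R%:E.
Proof.
rewrite /empirical_coupling /= /mscale /msum /=; congr (_ * _).
by apply: eq_bigr => k _; rewrite !nth_col_seq; exact: diracE.
Qed.

Lemma empirical_setT d (th : 'cV[R]_d) : (0 < d)%N -> empirical th setT = 1.
Proof.
move=> d_gt0; rewrite empiricalE (eq_bigr (fun=> 1)) => [|k _]; last by rewrite in_setT.
by rewrite sumEFin sumr_const card_ord -EFinM mulVf // pnatr_eq0 -lt0n.
Qed.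

Lemma integral_empirical d (th : 'cV[R]_d) (f : R -> \bar R) :
  measurable_fun setT f -> (forall x, 0 <= f x) ->
  \int[empirical th]_x f x = (d%:R^-1)%R%:E * \sum_(k < d) f (th k 0%R).
Proof.
move=> mf f_ge0; rewrite ge0_integral_mscale //; congr (_ * _).
rewrite ge0_integral_measure_sum //; apply: eq_bigr => k _.
by rewrite integral_dirac // diracE in_setT mul1e nth_col_seq.
Qed.

Lemma integral_empirical_coupling d (th th' : 'cV[R]_d) (f : (R * R)%type -> \bar R) :
  measurable_fun setT f -> (forall z, 0 <= f z) ->
  \int[empirical_coupling th th']_z f z
  = (d%:R^-1)%R%:E * \sum_(k < d) f (th k 0%R, th' k 0%R).
Proof.
move=> mf f_ge0; rewrite ge0_integral_mscale //; congr (_ * _).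
rewrite ge0_integral_measure_sum //; apply: eq_bigr => k _.
by rewrite integral_dirac // diracE in_setT mul1e !nth_col_seq.
Qed.

Lemma empirical_coupling_is_coupling d (th th' : 'cV[R]_d) : (0 < d)%N ->
  coupling (empirical th) (empirical th') (empirical_coupling th th').
Proof.
move=> d_gt0; split; last split.
- rewrite -(empirical_setT th d_gt0) empirical_couplingE empiricalE.
  by congr (_ * _); apply: eq_bigr => k _; rewrite !in_setT.
- move=> A _; rewrite empirical_couplingE empiricalE; congr (_ * _).
  by apply: eq_bigr => k _; rewrite in_setX in_setT andbT.
- move=> B _; rewrite empirical_couplingE empiricalE; congr (_ * _).
  by apply: eq_bigr => k _; rewrite in_setX in_setT.
Qed.

Lemma empirical_inP2 d (th : 'cV[R]_d) : (0 < d)%N -> inP2 (empirical th).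
Proof.
move=> d_gt0; split; first exact: empirical_setT.
rewrite /second_moment (integral_empirical _ (f := fun x : R => (x ^+ 2)%:E)).
- by rewrite sumEFin -EFinM ltry.
- by apply/measurable_EFinP; exact: measurable_funX.
- by move=> x; rewrite lee_fin sqr_ge0.
Qed.

Lemma esqrt_le (x : \bar R) (r : R) : x <= r%:E -> esqrt x <= (Num.sqrt r)%:E.
Proof. by case: x => [x||] //=; rewrite ?lee_fin ?sqrtr_ge0 // => /ler_wsqrtr. Qed.

(* The diagonal coupling of two empirical measures gives this bound. *)
Lemma W2_empirical_le d (th th' : 'cV[R]_d) : (0 < d)%N ->
  W2 (empirical th) (empirical th') <= (enorm (th - th') / Num.sqrt d%:R)%:E.
Proof.
move=> d_gt0; rewrite /enorm -sqrtrV ?ler0n // -sqrtrM ?sqnorm_ge0 // mulrC.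
apply: esqrt_le; apply: le_trans (ereal_inf_lbound _) _.
  by exists (empirical_coupling th th') => //; exact: empirical_coupling_is_coupling.
rewrite (integral_empirical_coupling _ _ (f := fun z : R * R => ((z.1 - z.2) ^+ 2)%:E)).
- rewrite sumEFin -EFinM lee_fin ler_wpM2l ?invr_ge0 ?ler0n //.
  by apply: ler_sum => k _; rewrite !mxE.
- apply/measurable_EFinP; apply: measurable_funX.
  by apply: measurable_funB; [exact: measurable_fst | exact: measurable_snd].
- by move=> z; rewrite lee_fin sqr_ge0.
Qed.

End EmpiricalMeasure.

Section DriftLipschitz.
Variable R : realType.

Lemma A3_const_ge0 K CA (s : R -> 'cV[R]_K -> R) : A3 CA s -> 0 <= CA.
Proof. by case=> _ _ grad_le _; apply: le_trans (grad_le 0); exact: enorm_ge0. Qed.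

Lemma s_lipschitz K CA (s : R -> 'cV[R]_K -> R) : A3 CA s ->
  forall a a' al al', `|s a' al' - s a al| <= CA * (`|a' - a| + K%:R * enorm (al' - al)).
Proof.
move=> hs; have CA_ge0 := A3_const_ge0 hs; case: hs => [[ds _ _ _] _ grad_le _].
move=> a a' al al'.
have sE b (bl : 'cV[R]_K) : s b bl = sjoint s (col_mx (const_mx b) bl).
  by rewrite /sjoint col_mxKu col_mxKd mxE.
have pder_le z i : `|pder i (sjoint s) z| <= CA.
  by apply: le_trans (grad_le z); have := coord_le_enorm (grad (sjoint s) z) i; rewrite mxE.
rewrite !sE; apply: le_trans (increment_le_pder_bound ds pder_le _ _) _.
rewrite ler_wpM2l // big_split_ord /= big_ord1 !col_mxEu !mxE lerD2l.
apply: le_trans (_ : _ <= \sum_(i < K) enorm (al' - al)) _.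
  apply: ler_sum => i _; rewrite !col_mxEd.
  by have := coord_le_enorm (al' - al) i; rewrite !mxE.
by rewrite sumr_const card_ord mulr_natl.
Qed.

Lemma svec_lipschitz K CA (s : R -> 'cV[R]_K -> R) d (th th' : 'cV[R]_d) al al' :
  A3 CA s ->
  enorm (svec s th' al' - svec s th al)
  <= CA * (enorm (th' - th) + K%:R * (Num.sqrt d%:R * enorm (al' - al))).
Proof.
move=> hs; have CA_ge0 := A3_const_ge0 hs.
pose bound := CA *: (\col_k `|(th' - th) k 0|)
              + (CA * K%:R * enorm (al' - al)) *: const_mx 1.
apply: (@le_trans _ _ (enorm bound)).
  apply: enorm_le_coord => k; rewrite !mxE mulr1.
  by apply: le_trans (s_lipschitz hs _ _ _ _) _; rewrite mulrDr mulrA.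
apply: le_trans (enormD _ _) _.
rewrite !enormZ enorm_col_norm enorm_const1 !ger0_norm ?mulr_ge0 ?enorm_ge0 ?ler0n //.
by rewrite mulrDr lerD2l -!mulrA [enorm _ * _]mulrC.
Qed.

Lemma G_lipschitz K CA (G : 'cV[R]_K -> {measure set R -> \bar R} -> 'cV[R]_K) d
    (th th' : 'cV[R]_d) al al' :
  A4 CA G -> 0 <= CA -> (0 < d)%N ->
  Num.sqrt d%:R * enorm (G al (empirical th) - G al' (empirical th'))
  <= CA * (enorm (th - th') + Num.sqrt d%:R * enorm (al - al')).
Proof.
case=> _ G_lip _ CA_ge0 d_gt0.
have sqrtd_gt0 : 0 < Num.sqrt (d%:R : R) by rewrite sqrtr_gt0 ltr0n.
have : enorm (G al (empirical th) - G al' (empirical th'))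
       <= CA * (enorm (al - al') + enorm (th - th') / Num.sqrt d%:R).
  rewrite -lee_fin; apply: le_trans (G_lip _ _ _ _ (empirical_inP2 th d_gt0)
                                          (empirical_inP2 th' d_gt0)) _.
  rewrite EFinM EFinD; apply: lee_wpmul2l; first by rewrite lee_fin.
  by rewrite leeD2l //; exact: W2_empirical_le.
move=> /(ler_wpM2l (ltW sqrtd_gt0)) /le_trans; apply.
by rewrite mulrCA mulrDr mulrCA mulfV ?gt_eqF // mulr1 addrC.
Qed.

End DriftLipschitz.

Section DerivativeBound.
Variable R : realType.

Lemma cvg_sum (T : topologicalType) (I : Type) (r : seq I) (F : I -> T -> R) (x : T) :
  (forall i, F i y @[y --> x] --> F i x) ->
  \sum_(i <- r) F i y @[y --> x] --> \sum_(i <- r) F i x.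
Proof.
move=> F_cvg; elim: r => [|i r IH].
  by under eq_fun do rewrite big_nil; rewrite big_nil; exact: cvg_cst.
by under eq_fun do rewrite big_cons; rewrite big_cons; exact: cvgD.
Qed.

Lemma enorm_continuous m : continuous (@enorm R m).
Proof.
move=> x; apply: (continuous_comp (f := fun v : 'cV[R]_m => \sum_(i < m) v i 0 ^+ 2)).
  apply: cvg_sum => i; have coord_cvg := @coord_continuous R m 1 i 0 x.
  by under eq_fun do rewrite expr2; rewrite expr2; exact: (cvgM coord_cvg coord_cvg).
exact: sqrt_continuous.
Qed.

(* If the difference quotient has no limit, [derive1] is the junk value [0]. *)
Lemma derive1_enorm_le m (f : R -> 'cV[R]_m) (x L : R) :
  (forall h, enorm (f (h + x) - f x) <= L * `|h|) -> enorm (derive1 f x) <= L.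
Proof.
move=> f_lip; rewrite /derive1.
set q := fun h : R => h^-1 *: (f (h + x) - f x).
have [q_cvg|q_ncvg] := pselect (cvg (q @ 0^')).
  apply: (closed_cvg (fun v => enorm v <= L)) q_cvg.
    apply: (@preimage_closed _ _ (@enorm R m) [set r | r <= L]).
      by move=> v _; exact: enorm_continuous.
    exact: closed_le.
  near=> h; have h_neq0 : h != 0 by near: h; exact: nbhs_dnbhs_neq.
  by rewrite /q enormZ normfV ler_pdivrMl ?normr_gt0 // mulrC.
have -> : lim (q @ 0^') = 0.
  rewrite /lim /lim_in getPN; last by move=> l ql; apply: q_ncvg; apply/cvg_ex; exists l.
  by apply/matrixP => i j; rewrite !mxE.
have := f_lip 1; rewrite normr1 mulr1 enorm0; exact: le_trans (enorm_ge0 _).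
Unshelve. all: by end_near.
Qed.

End DerivativeBound.

Lemma impulse_gronwall (R : realType) (D : nat -> R) (q M : R) (s0 : nat) :
  1 <= q -> 0 <= M -> D 0%N <= 0 ->
  (forall t, D t.+1 <= q * D t + (if t == s0 then M else 0)) ->
  forall t, D t <= (if (s0 < t)%N then M * q ^+ t else 0).
Proof.
move=> q_ge1 M_ge0 D0 D_step; have q_ge0 : 0 <= q by exact: le_trans q_ge1.
elim=> [|t IH] //; apply: le_trans (D_step t) _.
have [s0t|ts0|s0_eq] := ltngtP s0 t.
- rewrite ltnS ltnW // addr0 exprS mulrCA.
  by apply: ler_wpM2l => //; rewrite s0t in IH.
- rewrite ltnNge ltnW // in IH; rewrite ltnS leqNgt ts0 addr0.
  by apply: le_trans (ler_wpM2l q_ge0 IH) _; rewrite mulr0.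
- move: IH; rewrite -s0_eq ltnn ltnSn => IH.
  apply: le_trans (_ : q * 0 + M <= _); first by rewrite lerD2r ler_wpM2l.
  by rewrite mulr0 add0r ler_peMr // exprn_ege1.
Qed.

Section PerturbedDynamics.
Variables (R : realType) (n d K : nat) (X : 'M[R]_(n, d)) (y : 'cV[R]_n).
Variables (beta gamma CA C0 : R) (s : R -> 'cV[R]_K -> R).
Variable G : 'cV[R]_K -> {measure set R -> \bar R} -> 'cV[R]_K.
Variables (b : nat -> 'cV[R]_d) (th0 : 'cV[R]_d) (al0 : 'cV[R]_K).
Variables (u : 'cV[R]_d) (s0 : nat).
Hypotheses (gamma_gt0 : 0 < gamma) (d_gt0 : (0 < d)%N).
Hypotheses (hs : A3 CA s) (hG : A4 CA G) (hX : opnorm X <= C0).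

Local Notation traj eps t := (dyn X y beta gamma s G b th0 al0 u s0 eps t).

Definition dyn_gap (e1 e2 : R) (t : nat) : R :=
  enorm ((traj e1 t).1 - (traj e2 t).1)
  + Num.sqrt d%:R * enorm ((traj e1 t).2 - (traj e2 t).2).

Definition dyn_rate : R := `|beta| * C0 ^+ 2 + CA * (K%:R + 2).

Lemma dynS eps t :
  traj eps t.+1 =
  ((traj eps t).1 - gamma *: (beta *: (X^T *m (X *m (traj eps t).1 - y))
                              - svec s (traj eps t).1 (traj eps t).2
                              - (if t == s0 then eps *: u else 0))
     + Num.sqrt 2 *: (b t.+1 - b t),
   (traj eps t).2 + gamma *: G (traj eps t).2 (empirical (traj eps t).1)).
Proof. by rewrite /=; case: (traj eps t). Qed.

Lemma dyn_rate_ge0 : 0 <= dyn_rate.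
Proof.
have CA_ge0 := A3_const_ge0 hs.
apply: addr_ge0; first exact: mulr_ge0 (normr_ge0 _) (sqr_ge0 _).
by rewrite mulr_ge0 // addr_ge0 // ler0n.
Qed.

Local Notation theta_gap e1 e2 t := (enorm ((traj e1 t).1 - (traj e2 t).1)).
Local Notation alpha_gap e1 e2 t :=
  (Num.sqrt d%:R * enorm ((traj e1 t).2 - (traj e2 t).2)).
Local Notation impulse e1 e2 t := (if t == s0 then gamma * `|e1 - e2| * enorm u else 0).

(* The noise increments and the data [y] cancel in the difference of two trajectories. *)
Lemma theta_gap_step e1 e2 t :
  theta_gap e1 e2 t.+1
  <= theta_gap e1 e2 t + gamma * (`|beta| * (C0 ^+ 2 * theta_gap e1 e2 t))
     + gamma * (CA * (theta_gap e1 e2 t + K%:R * alpha_gap e1 e2 t)) + impulse e1 e2 t.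
Proof.
rewrite !dynS /=.
set a1 := (traj e1 t).1; set l1 := (traj e1 t).2.
set a2 := (traj e2 t).1; set l2 := (traj e2 t).2.
set I1 := if t == s0 then e1 *: u else 0; set I2 := if t == s0 then e2 *: u else 0.
have -> : X^T *m (X *m a1 - y) = X^T *m (X *m (a1 - a2)) + X^T *m (X *m a2 - y).
  by rewrite -mulmxDr addrA -mulmxDr subrK.
set Z := X^T *m (X *m a2 - y); set N := Num.sqrt 2 *: (b t.+1 - b t).
have -> : a1 - gamma *: (beta *: (X^T *m (X *m (a1 - a2)) + Z) - svec s a1 l1 - I1) + N
          - (a2 - gamma *: (beta *: Z - svec s a2 l2 - I2) + N)
        = (a1 - a2) - gamma *: (beta *: (X^T *m (X *m (a1 - a2))))
          + gamma *: (svec s a1 l1 - svec s a2 l2) + gamma *: (I1 - I2).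
  by apply/matrixP => i j; rewrite !mxE; ring.
apply: le_trans (enormD _ _) _; apply: lerD.
  apply: le_trans (enormD _ _) _; apply: lerD.
    apply: le_trans (enormB _ _) _; rewrite lerD2l !enormZ (gtr0_norm gamma_gt0).
    apply: ler_wpM2l; first exact: ltW.
    apply: ler_wpM2l => //; apply: le_trans (enorm_trmx_mulmx_le _ _) _.
    apply: le_trans (ler_wpM2r (enorm_ge0 _) hX) _; rewrite expr2 -mulrA.
    apply: ler_wpM2l; first exact: le_trans (opnorm_ge0 X) hX.
    exact: le_trans (enorm_mulmx_le _ _) (ler_wpM2r (enorm_ge0 _) hX).
  rewrite enormZ (gtr0_norm gamma_gt0); apply: ler_wpM2l; first exact: ltW.
  exact: svec_lipschitz.
rewrite /I1 /I2; case: (t == s0); last by rewrite subr0 scaler0 enorm0.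
by rewrite -scalerBl !enormZ (gtr0_norm gamma_gt0) mulrA.
Qed.

Lemma alpha_gap_step e1 e2 t :
  alpha_gap e1 e2 t.+1
  <= alpha_gap e1 e2 t + gamma * (CA * (theta_gap e1 e2 t + alpha_gap e1 e2 t)).
Proof.
rewrite !dynS /=.
set a1 := (traj e1 t).1; set l1 := (traj e1 t).2.
set a2 := (traj e2 t).1; set l2 := (traj e2 t).2.
have -> : l1 + gamma *: G l1 (empirical a1) - (l2 + gamma *: G l2 (empirical a2))
        = (l1 - l2) + gamma *: (G l1 (empirical a1) - G l2 (empirical a2)).
  by apply/matrixP => i j; rewrite !mxE; ring.
apply: le_trans (ler_wpM2l (sqrtr_ge0 _) (enormD _ _)) _.
rewrite mulrDr lerD2l enormZ (gtr0_norm gamma_gt0) mulrCA.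
apply: ler_wpM2l; first exact: ltW.
exact: (G_lipschitz _ _ _ _ hG (A3_const_ge0 hs) d_gt0).
Qed.

Lemma dyn_gap_step e1 e2 t :
  dyn_gap e1 e2 t.+1 <= (1 + gamma * dyn_rate) * dyn_gap e1 e2 t + impulse e1 e2 t.
Proof.
have CA_ge0 := A3_const_ge0 hs; have C0_ge0 := le_trans (opnorm_ge0 X) hX.
apply: le_trans (lerD (theta_gap_step e1 e2 t) (alpha_gap_step e1 e2 t)) _.
rewrite /dyn_gap /dyn_rate -subr_ge0.
set A := theta_gap e1 e2 t; set B := alpha_gap e1 e2 t; set I := impulse e1 e2 t.
have -> : (1 + gamma * (`|beta| * C0 ^+ 2 + CA * (K%:R + 2))) * (A + B) + I
          - (A + gamma * (`|beta| * (C0 ^+ 2 * A)) + gamma * (CA * (A + K%:R * B)) + I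
             + (B + gamma * (CA * (A + B))))
        = gamma * (`|beta| * C0 ^+ 2 * B + CA * K%:R * A + CA * B) by ring.
have B_ge0 : 0 <= B by rewrite mulr_ge0 ?sqrtr_ge0 ?enorm_ge0.
apply: mulr_ge0; first exact: ltW.
by rewrite !addr_ge0 // !mulr_ge0 //; exact: enorm_ge0.
Qed.

Lemma dyn_gap_le e t :
  dyn_gap e 0 t <= gamma * `|e| * enorm u * (1 + gamma * dyn_rate) ^+ t.
Proof.
have rate_ge1 : 1 <= 1 + gamma * dyn_rate.
  by rewrite lerDl mulr_ge0 ?dyn_rate_ge0 // ltW.
have impulse_ge0 : 0 <= gamma * `|e - 0| * enorm u.
  by rewrite !mulr_ge0 ?enorm_ge0 // ltW.
have gap0 : dyn_gap e 0 0 <= 0 by rewrite /dyn_gap /= !subrr !enorm0 mulr0 addr0.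
have := impulse_gronwall rate_ge1 impulse_ge0 gap0 (fun t => dyn_gap_step e 0 t) t.
rewrite subr0; case: ifP => // _ /le_trans; apply.
by rewrite -{1}(subr0 e) mulr_ge0 // exprn_ge0 // (le_trans ler01).
Qed.

Lemma dyn_gap_le_exp (T : R) e t : t%:R * gamma <= T ->
  dyn_gap e 0 t <= gamma * enorm u * expR (dyn_rate * T) * `|e|.
Proof.
move=> tT; apply: le_trans (dyn_gap_le e t) _.
have -> : gamma * enorm u * expR (dyn_rate * T) * `|e|
        = gamma * `|e| * enorm u * expR (dyn_rate * T) by ring.
apply: ler_wpM2l; first by rewrite !mulr_ge0 ?enorm_ge0 // ltW.
apply: le_trans (_ : expR (gamma * dyn_rate) ^+ t <= _).
  have rate_ge0 : 0 <= gamma * dyn_rate by rewrite mulr_ge0 ?dyn_rate_ge0 ?ltW.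
  by apply: lerXn2r; rewrite ?nnegrE ?expR_ge0 ?addr_ge0 ?expR_ge1Dx.
rewrite -expRM_natr ler_expR mulrAC mulrC.
by apply: ler_wpM2l; [exact: dyn_rate_ge0 | rewrite mulrC].
Qed.

(* A bound on difference quotients bounds the derivative, so no differentiability of
   the dynamics in [eps] is needed. *)
Lemma derive1_dyn_le (T M : R) t : enorm u <= M -> t%:R * gamma <= T ->
  enorm (derive1 (fun eps => (traj eps t).1) 0)
  + Num.sqrt d%:R * enorm (derive1 (fun eps => (traj eps t).2) 0)
  <= 2 * M * expR (dyn_rate * T) * gamma.
Proof.
move=> u_le tT; set L := gamma * enorm u * expR (dyn_rate * T).
have sqrtd_gt0 : 0 < Num.sqrt (d%:R : R) by rewrite sqrtr_gt0 ltr0n.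
have gap_le e := dyn_gap_le_exp e tT; rewrite -/L in gap_le.
have th_le : enorm (derive1 (fun eps => (traj eps t).1) 0) <= L.
  apply: derive1_enorm_le => h; rewrite addr0; apply: le_trans (gap_le h).
  by rewrite lerDl mulr_ge0 ?sqrtr_ge0 ?enorm_ge0.
have al_le : enorm (derive1 (fun eps => (traj eps t).2) 0) <= L / Num.sqrt d%:R.
  apply: derive1_enorm_le => h; rewrite addr0 mulrAC ler_pdivlMr //.
  by apply: le_trans (gap_le h); rewrite mulrC lerDr enorm_ge0.
have L_le : L <= M * expR (dyn_rate * T) * gamma.
  have -> : M * expR (dyn_rate * T) * gamma = gamma * M * expR (dyn_rate * T) by ring.
  apply: ler_wpM2r; first exact: expR_ge0.
  by apply: ler_wpM2l => //; exact: ltW.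
apply: le_trans (lerD th_le (ler_wpM2l (sqrtr_ge0 _) al_le)) _.
rewrite mulrCA mulfV ?gt_eqF // mulr1; apply: le_trans (lerD L_le L_le) _.
lra.
Qed.

End PerturbedDynamics.

Theorem mainTheorem13 (R : realType) (K : nat) (T C0 beta delta CA : R) :
  0 < T -> 0 < C0 ->
  exists C : R, 0 < C /\
  forall (gamma : R), 0 < gamma ->
  forall (n d : nat) (X : 'M[R]_(n, d)) (y : 'cV[R]_n)
         (s : R -> 'cV[R]_K -> R)
         (G : 'cV[R]_K -> {measure set R -> \bar R} -> 'cV[R]_K)
         (b : nat -> 'cV[R]_d) (th0 : 'cV[R]_d) (al0 : 'cV[R]_K),
    (0 < d)%N ->
    n%:R <= delta * d%:R ->
    A3 CA s -> A4 CA G ->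
    opnorm X <= C0 ->
    b 0%N = 0 ->
    forall s0 t : nat, (s0 <= t)%N -> t%:R * gamma <= T ->
      (forall j : 'I_d,
         let traj := fun eps : R =>
           dyn X y beta gamma s G b th0 al0 (evec j) s0 eps t in
         enorm (derive1 (fun eps => (traj eps).1) 0)
         + Num.sqrt d%:R * enorm (derive1 (fun eps => (traj eps).2) 0)
         <= C * gamma) /\
      (forall i : 'I_n,
         let traj := fun eps : R =>
           dyn X y beta gamma s G b th0 al0 (X^T *m evec i) s0 eps t in
         enorm (derive1 (fun eps => (traj eps).1) 0)
         + Num.sqrt d%:R * enorm (derive1 (fun eps => (traj eps).2) 0)
         <= C * gamma).
Proof.
move=> T_gt0 C0_gt0; set M := Num.max 1 C0; set E := expR (dyn_rate K beta CA C0 * T).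
have M_ge1 : 1 <= M by rewrite le_max lexx.
exists (2 * M * E); split.
  by rewrite !mulr_gt0 ?expR_gt0 // (lt_le_trans ltr01 M_ge1).
move=> gamma gamma_gt0 n d X y s G b th0 al0 d_gt0 _ hs hG hX _ s0 t _ tT.
split=> [j|i] /=; apply: (derive1_dyn_le y beta b th0 al0 s0 gamma_gt0 d_gt0 hs hG hX _ tT).
  by rewrite enorm_evec.
apply: le_trans (enorm_trmx_mulmx_le _ _) _.
by rewrite enorm_evec mulr1 (le_trans hX) // le_max lexx orbT.
Qed.
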